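(* Let $\Lambda_i\in\mathcal H_I$, $i\in[n]$ with $n\ge2$, $\mathbb P$ atomless, and $Y\ge0$ with $1<\mathbb E^{\mathbb P}(Y)<\infty$. Then for all $X\in\mathcal X$ $$\mathop{\square}_{i=1}^n\sup_{\mathbb Q\in\mathcal P(\mathbb P,0,Y)}\Lambda_i\mathrm{VaR}^{\mathbb Q}(X)=\inf_{\mathbf y_{n-1}\in\mathbb R^{n-1}}\inf\{x\in\mathbb R:\mathbb E^{\mathbb P}(Y\mathds 1_{\{X>x\}})\le\Lambda^{\mathbf y_{n-1}}(x)\},$$ where for $\mathbf y_{n-1}=(y_1,\dots,y_{n-1})$ and $y_0=0$, $\Lambda^{\mathbf y_{n-1}}(x)=\Lambda_n(x-y_{n-1})+\sum_{i=1}^{n-1}\Lambda_i(y_i-y_{i-1})$.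
   Context: $\Lambda\mathrm{VaR}^{\mathbb Q}(X)=\inf\{x\in\mathbb R:\mathbb Q(X>x)\le\Lambda(x)\}$; $\mathcal H_I$: increasing functions $\mathbb R\to(0,1)$. $\mathcal P(\mathbb P,0,Y)=\{\mathbb Q\ll\mathbb P:0\le\mathrm d\mathbb Q/\mathrm d\mathbb P\le Y\}$. Inf-convolution $\mathop{\square}_i\rho_i(X)=\inf\{\sum_i\rho_i(X_i):X_i\in\mathcal X,\sum_iX_i=X\}$, $\mathcal X$ a set of real-valued random variables containing constants, closed under sums, differences, multiplication by indicators. *)

From HB Require Import structures.
From mathcomp Require Import all_boot all_order all_algebra.
From mathcomp Require Import all_classical all_reals all_analysis.
Set Implicit Arguments. Unset Strict Implicit. Unset Printing Implicit Defensive.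
Import Order.TTheory GRing.Theory Num.Theory.
Local Open Scope classical_set_scope.
Local Open Scope ring_scope.
Local Open Scope ereal_scope.

Section Defs.
Context (R : realType) (d : measure_display) (T : measurableType d).

Definition atomless (P : probability T R) : Prop :=
  forall A : set T, measurable A -> 0 < P A ->
    exists B : set T, [/\ measurable B, B `<=` A, 0 < P B & P B < P A].

Definition HI (L : R -> R) : Prop :=
  (forall x y : R, (x <= y)%R -> (L x <= L y)%R) /\
  (forall x : R, (0 < L x)%R /\ (L x < 1)%R).

Definition Pset (P : probability T R) (Y : T -> R) : set (probability T R) :=
  [set Q : probability T R | exists f : T -> R,
     [/\ measurable_fun setT f,
         (forall w, (0 <= f w)%R /\ (f w <= Y w)%R) &
         (forall A : set T, measurable A ->
            Q A = \int[P]_(w in A) (f w)%:E)]].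

Definition LVaR (L : R -> R) (Q : probability T R) (X : T -> R) : \bar R :=
  ereal_inf [set x%:E | x in [set x : R | Q [set w | (x < X w)%R] <= (L x)%:E]].

Definition supLVaR (P : probability T R) (Y : T -> R) (L : R -> R) (X : T -> R)
  : \bar R :=
  ereal_sup [set LVaR L Q X | Q in Pset P Y].

Definition admissible (Xs : set (T -> R)) : Prop :=
  [/\ (forall X, Xs X -> measurable_fun setT X),
      (forall c : R, Xs (fun _ => c)),
      (forall X1 X2, Xs X1 -> Xs X2 -> Xs (fun w => X1 w + X2 w)%R),
      (forall X1 X2, Xs X1 -> Xs X2 -> Xs (fun w => X1 w - X2 w)%R) &
      (forall X (A : set T), Xs X -> measurable A ->
          Xs (fun w => X w * (\1_A w : R))%R)].

Definition infconv (Xs : set (T -> R)) (n : nat)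
  (rho : nat -> (T -> R) -> \bar R) (X : T -> R) : \bar R :=
  ereal_inf [set (\sum_(1 <= i < n.+1) rho i (Xi i))%E |
     Xi in [set Xi : nat -> T -> R |
        (forall i, (1 <= i <= n)%N -> Xs (Xi i)) /\
        (forall w, (\sum_(1 <= i < n.+1) Xi i w)%R = X w)]].

(* Lambda^{y_{n-1}}(x) = Lambda_n(x - y_{n-1}) + sum_{i=1}^{n-1} Lambda_i(y_i - y_{i-1}),
   with y : nat -> R, y 0 = 0 *)
Definition Lam_y (L : nat -> R -> R) (n : nat) (y : nat -> R) (x : R) : R :=
  (L n (x - y n.-1) + \sum_(1 <= i < n) L i (y i - y i.-1))%R.

End Defs.

(* Let nu(A) = \int_A Y dP.  Every Q in P(P,0,Y) satisfies Q <= nu; conversely,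
   since nu(Omega) > 1, for an event A and r < 1 with r < nu(A) a density
   equal to Y rescaled by one constant on A and another off A defines a
   Q in P(P,0,Y) with Q(A) > r.  Hence sup_Q Lambda-VaR^Q(Z) is the Lambda-VaR
   of Z computed with nu in place of a probability.
   For an admissible split X = X_1 + ... + X_n, the union bound
   nu(X > x_1 + ... + x_n) <= sum_i nu(X_i > x_i) gives one inequality.  For
   the other, nu is atomless like P, so by Sierpinski's intermediate value
   theorem {X > x} can be cut along a partition (B_i) into pieces of nu-mass
   at most Lambda_i(x_i); then X_i = x_i + (X - x) 1_{B_i} is admissible, sums
   to X and exceeds x_i only on such a piece. *)

From HB Require Import structures.
From mathcomp Require Import all_boot all_order all_algebra.
From mathcomp Require Import all_classical all_reals all_analysis measurable_realfun.
From mathcomp Require Import ring lra.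
Set Implicit Arguments.
Import Order.TTheory GRing.Theory Num.Theory.
Local Open Scope classical_set_scope.
Local Open Scope ring_scope.

Lemma measurable_fun_o_infty d (T : measurableType d) (R : realType) (Z : T -> R) (r : R) :
  measurable_fun setT Z -> measurable [set w | r < Z w].
Proof. by move=> mZ; rewrite -preimage_itvoy -[X in measurable X]setTI; exact: mZ. Qed.

Lemma measurable_fun_infty_o d (T : measurableType d) (R : realType) (Z : T -> R) (r : R) :
  measurable_fun setT Z -> measurable [set w | Z w < r].
Proof. by move=> mZ; rewrite -preimage_itvNyo -[X in measurable X]setTI; exact: mZ. Qed.

Section finite_measure_real.
Context d (T : measurableType d) (R : realType) (mu : {measure set T -> \bar R}).

Lemma nondecreasing_bigcup_mu_le (F : nat -> set T) (c : \bar R) :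
  (forall k, measurable (F k)) -> (forall k, F k `<=` F k.+1) ->
  (forall k, (mu (F k) <= c)%E) -> (mu (\bigcup_k F k) <= c)%E.
Proof.
move=> mF incF Fc.
have ndF : nondecreasing_seq F by apply/nondecreasing_seqP => k; exact/subsetPset.
have muF := @nondecreasing_cvg_mu _ _ R mu F mF (bigcup_measurable (fun k _ => mF k)) ndF.
rewrite -(cvg_lim _ muF) //; apply: lime_le; first by apply/cvg_ex; exists (mu (\bigcup_k F k)).
exact: nearW.
Qed.

Definition mreal (A : set T) : R := fine (mu A).

Lemma mreal_ge0 A : 0 <= mreal A.
Proof. by rewrite /mreal fine_ge0 // measure_ge0. Qed.

Lemma mreal0 : mreal set0 = 0.
Proof. by rewrite /mreal measure0. Qed.

Hypothesis mu_fin : (mu setT < +oo)%E.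

Lemma mrealE A : measurable A -> mu A = (mreal A)%:E.
Proof.
move=> mA; rewrite /mreal fineK // ge0_fin_numE ?measure_ge0 //.
by rewrite (le_lt_trans _ mu_fin) // le_measure // inE.
Qed.

Lemma le_mreal A B : measurable A -> measurable B -> A `<=` B -> mreal A <= mreal B.
Proof. by move=> mA mB AB; rewrite -lee_fin -!mrealE // le_measure // inE. Qed.

Lemma mrealU A B : measurable A -> measurable B -> A `&` B = set0 ->
  mreal (A `|` B) = mreal A + mreal B.
Proof.
move=> mA mB AB; apply: EFin_inj.
by rewrite EFinD -!mrealE //; [exact: measureU | exact: measurableU].
Qed.

Lemma mrealD A B : measurable A -> measurable B -> B `<=` A ->
  mreal (A `\` B) = mreal A - mreal B.
Proof.
move=> mA mB BA; rewrite -{2}(setDUK BA) setUC mrealU ?addrK //; first exact: measurableD.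
by rewrite setDE -setIA setICl setI0.
Qed.

End finite_measure_real.
Arguments mreal {d T R} mu A.
Arguments mrealE {d T R mu} mu_fin {A}.
Arguments le_mreal {d T R mu} mu_fin {A B}.
Arguments mrealU {d T R mu} mu_fin {A B}.
Arguments mrealD {d T R mu} mu_fin {A B}.
Arguments nondecreasing_bigcup_mu_le {d T R} mu {F c}.

Definition has_small_subsets d (T : measurableType d) (R : realType)
    (mu : {measure set T -> \bar R}) :=
  forall A, measurable A -> 0 < mreal mu A -> forall e : R, 0 < e ->
    exists B, [/\ measurable B, B `<=` A, 0 < mreal mu B & mreal mu B < e].

Section intermediate_values.
Context d (T : measurableType d) (R : realType) (mu : {measure set T -> \bar R}).
Hypotheses (mu_fin : (mu setT < +oo)%E) (mu_small : has_small_subsets mu).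
Local Notation m := (mreal mu).

Lemma near_maximal_extension (S : set T) (c : R) (B : set T) : measurable S ->
  exists C, [/\ measurable C, C `<=` S `\` B &
    (m B <= c -> m B + m C <= c /\
      forall D, measurable D -> D `<=` S `\` B -> m B + m D <= c -> m D <= 2 * m C)].
Proof.
move=> mS; have [Bc|Bc] := leP (m B) c; last by exists set0; split => //; exact: sub0set.
pose E := [set m D | D in [set D | [/\ measurable D, D `<=` S `\` B & m B + m D <= c]]].
have E0 : E 0 by exists set0; [split; rewrite ?mreal0 ?addr0 | exact: mreal0].
have hs : has_sup E.
  split; first by exists 0.
  exists c => _ [D [_ _ HD] <-]; have := mreal_ge0 mu B; lra.
have [s0|s0] := leP (sup E) 0.
  exists set0; split => // _; split => [|D mD DS HD]; first by rewrite mreal0 addr0.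
  by rewrite mreal0 mulr0 (le_trans _ s0) //; apply: sup_upper_bound => //; exists D.
have [_ [C [mC CS HC] <-] HsC] := sup_adherent (divr_gt0 s0 (ltr0Sn R 1)) hs.
exists C; split => // _; split => // D mD DS HD.
have : m D <= sup E by apply: sup_upper_bound => //; exists D.
lra.
Qed.

(* Sierpinski: greedily add near-maximal admissible pieces; if the limit set
   fell short of [c], a small piece of what is left would contradict the
   near-maximality of every step. *)
Lemma measure_ivt (S : set T) (c : R) : measurable S -> 0 <= c -> c <= m S ->
  exists B, [/\ measurable B, B `<=` S & m B = c].
Proof.
move=> mS c0 cS.
have [g Hg] := choice (fun B => near_maximal_extension S c B mS).
pose F := fix F k := if k is k.+1 then F k `|` g (F k) else set0.
have disjF k : F k `&` g (F k) = set0.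
  by rewrite -subset0 => x [Fx]; case: (Hg (F k)) => _ /(_ x) + _ => /[apply] -[].
have HF k : [/\ measurable (F k), F k `<=` S & m (F k) <= c].
  elim: k => [|k [mk Sk ck]] /=; first by split; rewrite ?mreal0.
  have [mg gS /(_ ck) [gc _]] := Hg (F k).
  split; [exact: measurableU | by move=> x [/Sk|/gS[]] | by rewrite mrealU].
have mF k : measurable (F k) by case: (HF k).
pose B := \bigcup_k F k.
have mB : measurable B by exact: bigcup_measurable.
have BS : B `<=` S by move=> x [k _]; case: (HF k) => _ + _; apply.
exists B; split => //.
have Bc : m B <= c.
  rewrite -lee_fin -mrealE //; apply: nondecreasing_bigcup_mu_le => // k; first by move=> x; left.
  by rewrite mrealE // lee_fin; case: (HF k).
apply/eqP; rewrite eq_le Bc /= leNgt; apply/negP => Blt.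
have mSB : measurable (S `\` B) by exact: measurableD.
have SB0 : 0 < m (S `\` B).
  by rewrite mrealD //; lra.
have cB0 : 0 < c - m B by rewrite subr_gt0.
have [D [mD DS D0 Dlt]] := mu_small _ mSB SB0 _ cB0.
have Dk k : m D <= 2 * m (g (F k)).
  have [mk Sk ck] := HF k; have [_ _ /(_ ck) [_]] := Hg (F k); apply => //.
    by move=> x /DS [Sx nBx]; split => // Fx; apply: nBx; exists k.
  have : m (F k) <= m B by apply: le_mreal => // x Fx; exists k.
  lra.
have lowF k : k%:R * (m D / 2) <= m (F k).
  elim: k => [|k IH] /=; first by rewrite mul0r mreal0.
  have [mg _ _] := Hg (F k).
  rewrite mrealU // -natr1 mulrDl mul1r; have := Dk k; lra.
have D20 : 0 < m D / 2 by rewrite divr_gt0.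
pose k := Num.bound (c / (m D / 2)).
have := archi_boundP (divr_ge0 c0 (ltW D20)).
rewrite ltr_pdivrMr // -/k; have := lowF k; case: (HF k) => _ _; lra.
Qed.

Lemma measure_split_le k (c : nat -> R) S : (forall i, (i <= k)%N -> 0 <= c i) ->
  measurable S -> m S <= \sum_(0 <= i < k.+1) c i ->
  exists A : nat -> set T, [/\ forall i, measurable (A i), forall i, A i `<=` S,
    forall i j, i != j -> A i `&` A j = set0, forall i, (i <= k)%N -> m (A i) <= c i &
    forall w, S w -> exists2 i, (i <= k)%N & A i w].
Proof.
elim: k c S => [|k IH] c S c0 mS HS.
  exists (fun i => if i == 0%N then S else set0); split.
  - by move=> [|i] /=.
  - by move=> [|i] //= x.
  - by move=> [|i] [|j] //= _; rewrite ?setI0 ?set0I.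
  - by case=> // _; rewrite big_nat1 in HS.
  - by move=> w Sw; exists 0%N.
have [B [mB BS [HSB HB]]] : exists B, [/\ measurable B, B `<=` S &
    m (S `\` B) <= \sum_(0 <= i < k.+1) c i.+1 /\ m B <= c 0%N].
  rewrite big_nat_recl // in HS.
  have [h|h] := leP (c 0%N) (m S).
  - have [B [mB BS mBe]] := measure_ivt S _ mS (c0 0%N isT) h.
    by exists B; split => //; rewrite mrealD // mBe; split => //; lra.
  - exists S; split => //; rewrite setDv mreal0; split; last exact: ltW.
    by rewrite big_mkord; apply: sumr_ge0 => i _; exact: c0 (ltn_ord i).
have [A' [mA' A'S A'd A'c A'w]] :=
  IH (fun i => c i.+1) (S `\` B) (fun i => c0 i.+1) (measurableD mS mB) HSB.
exists (fun i => if i is i'.+1 then A' i' else B); split.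
- by case.
- by move=> [|i] //= x /A'S [].
- have dB j : B `&` A' j = set0.
    by rewrite -subset0 => x [Bx /A'S [_ nB]]; exact: nB Bx.
  by move=> [|i] [|j] //= ij; [rewrite setIC dB | exact: A'd].
- by case=> [|i] //= /A'c.
- move=> w Sw; have [Bw|nBw] := pselect (B w); first by exists 0%N.
  by have [i ik Aw] := A'w w (conj Sw nBw); exists i.+1.
Qed.

Lemma measure_partition_le k (c : nat -> R) S : (forall i, (i <= k)%N -> 0 <= c i) ->
  measurable S -> m S <= \sum_(0 <= i < k.+1) c i ->
  exists B : nat -> set T, [/\ forall i, measurable (B i),
    forall i j, i != j -> B i `&` B j = set0,
    forall i, (i <= k)%N -> m (B i `&` S) <= c i &
    forall w, exists2 i, (i <= k)%N & B i w].
Proof.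
move=> c0 mS HS; have [A [mA AS Ad Ac Aw]] := measure_split_le k c S c0 mS HS.
have AnS j : A j `&` ~` S = set0 by rewrite -subset0 => w [/AS Sw]; apply.
pose B i := if i == 0%N then A i `|` ~` S else A i.
have BS i : B i `&` S = A i.
  by rewrite /B; case: ifP => _; rewrite ?setIUl ?setICl ?setU0; apply/setIidPl/AS.
exists B; split.
- by move=> i; rewrite /B; case: ifP => _ //; exact/measurableU/measurableC.
- move=> i j ij; rewrite /B; case: eqVneq => [ei|_]; case: eqVneq => [ej|_] //.
  + by move: ij; rewrite ei ej eqxx.
  + by rewrite setIUl Ad // set0U setIC AnS.
  + by rewrite setIUr Ad // set0U AnS.
  + exact: Ad.
- by move=> i ik; rewrite BS; exact: Ac.
- move=> w; have [Sw|nSw] := pselect (S w).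
    by have [i ik Aiw] := Aw w Sw; exists i => //; rewrite /B; case: ifP => _; try left.
  by exists 0%N => //; rewrite /B /=; right.
Qed.

End intermediate_values.

Section density.
Context d (T : measurableType d) (R : realType) (mu : {measure set T -> \bar R}).
Variable f : T -> R.
Hypotheses (mf : measurable_fun setT f) (f0 : forall w, 0 <= f w).

Definition density (A : set T) : \bar R := \int[mu]_(w in A) (f w)%:E.

Let density0 : density set0 = 0%E.
Proof. exact: integral_set0. Qed.

Let density_ge0 A : (0 <= density A)%E.
Proof. by apply: integral_ge0 => w _; rewrite lee_fin. Qed.

Let density_sigma_additive : semi_sigma_additive density.
Proof.
apply: semi_sigma_additive_nng_induced => [|w]; last by rewrite lee_fin.
exact/measurable_EFinP.
Qed.

HB.instance Definition _ :=
  isMeasure.Build _ _ _ density density0 density_ge0 density_sigma_additive.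

Lemma density_measure_ex : exists nu : {measure set T -> \bar R}, forall A, nu A = density A.
Proof. by exists density. Qed.

Section density_probability.
Hypothesis f1 : (\int[mu]_w (f w)%:E = 1)%E.

HB.instance Definition _ := Measure_isProbability.Build _ _ _ density f1.

Lemma density_probability_ex : exists Q : probability T R, forall A, Q A = density A.
Proof. by exists density. Qed.

End density_probability.
End density.

Section atomless.
Context d (T : measurableType d) (R : realType) (P : probability T R).
Hypothesis P_atomless : atomless P.
Local Notation p := (mreal P).

Let P_fin : (P setT < +oo)%E.
Proof. by rewrite probability_setT ltry. Qed.

Lemma atomless_halve A : measurable A -> 0 < p A ->
  exists B, [/\ measurable B, B `<=` A, 0 < p B & 2 * p B <= p A].
Proof.
move=> mA A0; have PA0 : (0 < P A)%E by rewrite (mrealE P_fin mA).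
have [C [mC CA]] := P_atomless A mA PA0.
rewrite (mrealE P_fin mC) (mrealE P_fin mA) !lte_fin => C0 CA'.
have [h|h] := leP (2 * p C) (p A); first by exists C.
exists (A `\` C); split; [exact: measurableD | by move=> x [] | |];
  rewrite (mrealD P_fin) //; lra.
Qed.

Lemma atomless_small_subsets : has_small_subsets P.
Proof.
move=> A mA A0 e e0.
have halves k : exists B, [/\ measurable B, B `<=` A, 0 < p B & p B * 2 ^+ k <= p A].
  elim: k => [|k [B [mB BA B0 Bk]]]; first by exists A; rewrite expr0 mulr1; split.
  have [C [mC CB C0 CB2]] := atomless_halve B mB B0.
  exists C; split => //; first exact: subset_trans CB BA.
  by rewrite exprS mulrA (le_trans _ Bk) // ler_wpM2r ?exprn_ge0 // mulrC.
pose k := Num.bound (p A / e).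
have [B [mB BA B0 Bk]] := halves k.
exists B; split => //.
have : p A / e < 2 ^+ k by apply: upper_nthrootP.
rewrite ltr_pdivrMr // => hk.
by rewrite -(ltr_pM2r (exprn_gt0 k (ltr0Sn R 1))) (le_lt_trans Bk) // mulrC.
Qed.

End atomless.

Section band.
Context (T : Type) (R : realType) (Y : T -> R).

Definition band (j : nat) : set T := [set w | j.+1%:R^-1 < Y w < j.+1%:R].

Lemma band_subS j : band j `<=` band j.+1.
Proof.
move=> w /andP[jY Yj]; apply/andP; split; last by rewrite (lt_trans Yj) // ltr_nat.
by rewrite (le_lt_trans _ jY) // lef_pV2 ?posrE // ler_nat.
Qed.

Lemma bigcup_band : \bigcup_j band j = [set w | 0 < Y w].
Proof.
apply/seteqP; split => [w [j _ /andP[jY _]]|w /= Y0]; first exact: lt_trans jY.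
have Yinv0 : 0 < (Y w)^-1 by rewrite invr_gt0.
have := archi_boundP (addr_ge0 (ltW Y0) (ltW Yinv0)).
set k := Num.bound _ => hk; exists k => //; apply/andP; split.
- by rewrite -[ltRHS]invrK ltf_pV2 ?posrE // -natr1; lra.
- by rewrite -natr1; lra.
Qed.

End band.
Arguments band {T R} Y j.

Lemma measurable_band d (T : measurableType d) (R : realType) (Y : T -> R) j :
  measurable_fun setT Y -> measurable (band Y j).
Proof.
move=> mY; rewrite (_ : band Y j = [set w | j.+1%:R^-1 < Y w] `&` [set w | Y w < j.+1%:R]).
  by apply: measurableI; [exact: measurable_fun_o_infty | exact: measurable_fun_infty_o].
by apply/seteqP; split => w /=; [case/andP | case=> *; apply/andP].
Qed.

Section increments.
Context {R : realType}.
Implicit Types (n : nat) (y xi : nat -> R) (x : R).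

Definition increments n y x (i : nat) : R :=
  if (i < n)%N then y i - y i.-1 else x - y n.-1.

Lemma sum_increments n y x : (0 < n)%N -> y 0%N = 0 ->
  \sum_(1 <= i < n.+1) increments n y x i = x.
Proof.
move=> n0 y0; rewrite big_nat_recr //= {2}/increments ltnn.
rewrite (@telescope_sumr_eq _ 1 n (fun k => y k.-1)) // => [|k /andP[_ kn]].
  by rewrite /= y0 subr0 addrC subrK.
by rewrite /increments kn.
Qed.

Lemma Lam_y_increments n (L : nat -> R -> R) y x : (0 < n)%N ->
  Lam_y L n y x = \sum_(1 <= i < n.+1) L i (increments n y x i).
Proof.
move=> n0; rewrite /Lam_y big_nat_recr //= /increments ltnn addrC; congr (_ + _).
by apply: eq_big_nat => i /andP[_ ->].
Qed.

Definition partial_sums xi (k : nat) : R := \sum_(1 <= i < k.+1) xi i.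

Lemma partial_sums0 xi : partial_sums xi 0 = 0.
Proof. by rewrite /partial_sums big_geq. Qed.

Lemma increments_partial_sums n xi i : (1 <= i <= n)%N ->
  increments n (partial_sums xi) (partial_sums xi n) i = xi i.
Proof.
have sumS k : partial_sums xi k.+1 - partial_sums xi k = xi k.+1.
  by rewrite /partial_sums big_nat_recr //= addrC addrK.
case: i => // i /andP[_ ilen]; rewrite /increments; case: ltnP => [_|nle].
  exact: sumS.
by rewrite (_ : n = i.+1) /= ?sumS //; apply/eqP; rewrite eqn_leq nle ilen.
Qed.

End increments.

Lemma sum_indic_partition (T : Type) (R : realType) {B : nat -> set T} {n j : nat} {w : T} :
  (forall i k, i != k -> B i `&` B k = set0) -> (j < n)%N -> B j w ->
  \sum_(0 <= i < n) (\1_(B i) w : R) = 1.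
Proof.
move=> Bdisj jn Bjw.
rewrite (bigD1_seq j) ?mem_index_iota ?iota_uniq //= indicE mem_set // big1 ?addr0 //.
move=> i ij; rewrite indicE memNset // => Biw.
by have := Bdisj i j ij; rewrite -subset0 => /(_ w); apply.
Qed.

Lemma measure_sum_gt_le d (T : measurableType d) (R : realType)
    (mu : {measure set T -> \bar R}) n (Xi : nat -> T -> R) (X : T -> R) (xi : nat -> R) :
  (forall i, (1 <= i <= n)%N -> measurable_fun setT (Xi i)) -> measurable_fun setT X ->
  (forall w, \sum_(1 <= i < n.+1) Xi i w = X w) ->
  (mu [set w | (\sum_(1 <= i < n.+1) xi i < X w)%R] <=
   \sum_(1 <= i < n.+1) mu [set w | (xi i < Xi i w)%R])%E.
Proof.
move=> mXi mX sumXi; rewrite [X in (_ <= X)%E]big_add1 /= big_mkord.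
apply: (@content_subadditive _ _ _ mu _ (fun k => [set w | xi k.+1 < Xi k.+1 w])).
- by move=> k /= kn; apply/measurable_fun_o_infty/mXi; rewrite ltnS.
- exact: measurable_fun_o_infty.
rewrite -(bigcup_mkord n (fun k => [set w | xi k.+1 < Xi k.+1 w])) => w /=.
rewrite -sumXi => xX; apply: contrapT => noXi; move: xX.
apply/negP; rewrite -leNgt !big_add1 /= !big_mkord.
apply: ler_sum => k _; rewrite leNgt; apply/negP => kX.
by apply: noXi; exists k => /=.
Qed.

Lemma convex_weights {R : realFieldType} {a b r : R} : 0 <= a -> 0 <= b -> 1 < a + b ->
  r < 1 -> r < a -> exists al be : R,
    [/\ 0 <= al <= 1, 0 <= be <= 1, al * a + be * b = 1 & r < al * a].
Proof.
move=> a0 b0 ab1 r1 ra; have [a1|a1] := leP a 1.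
- have b0' : 0 < b by lra.
  exists 1, ((1 - a) / b); rewrite mul1r divfK ?gt_eqF //.
  split; [lra | | lra | lra].
  by rewrite divr_ge0 ?subr_ge0 //= ler_pdivrMr //; lra.
- have a0' : 0 < a by lra.
  exists a^-1, 0; rewrite mul0r addr0 mulVf ?gt_eqF //.
  split; [| lra | by [] | lra].
  by rewrite invr_ge0 invf_le1 ?ltW //; lra.
Qed.

Definition LVaR_mu {T : Type} {R : realType} (L : R -> R) (mu : set T -> \bar R)
    (X : T -> R) : \bar R :=
  ereal_inf [set x%:E | x in [set x : R | (mu [set w | (x < X w)%R] <= (L x)%:E)%E]].

Section density_bounds.
Context d (T : measurableType d) (R : realType) (P : probability T R) (Y : T -> R).
Variable nu : {measure set T -> \bar R}.
Hypotheses (mY : measurable_fun setT Y) (Y0 : forall w, 0 <= Y w).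
(* [density P Y] is canonically a measure only inside Section density. *)
Hypothesis nuE : forall A, nu A = density P Y A.

Lemma Pset_le_density Q A : Pset P Y Q -> measurable A -> (Q A <= nu A)%E.
Proof.
move=> [f [mf fY QE]] mA; rewrite QE // nuE; apply: ge0_le_integral => //.
- by move=> w _; rewrite lee_fin; case: (fY w).
- exact/measurable_funTS/measurable_EFinP.
- exact/measurable_funTS/measurable_EFinP.
- by move=> w _; rewrite lee_fin; case: (fY w).
Qed.

Lemma supLVaR_le (L : R -> R) (Z : T -> R) (x : R) : measurable_fun setT Z ->
  (nu [set w | (x < Z w)%R] <= (L x)%:E)%E -> (supLVaR P Y L Z <= x%:E)%E.
Proof.
move=> mZ hx; apply: ge_ereal_sup => _ [Q PQ <-]; apply: ereal_inf_lbound.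
by exists x => //=; rewrite (le_trans _ hx) // Pset_le_density //; exact: measurable_fun_o_infty.
Qed.

Lemma density_le_mul A (K : R) : measurable A -> (forall w, A w -> Y w <= K) ->
  (nu A <= K%:E * P A)%E.
Proof.
move=> mA YK; rewrite nuE -integral_cst //; apply: ge0_le_integral => //.
- by move=> w _; rewrite lee_fin.
- exact/measurable_funTS/measurable_EFinP.
Qed.

Lemma density_ge_mul A (a : R) : measurable A -> 0 <= a -> (forall w, A w -> a <= Y w) ->
  (a%:E * P A <= nu A)%E.
Proof.
move=> mA a0 aY; rewrite nuE -integral_cst //; apply: ge0_le_integral => //.
exact/measurable_funTS/measurable_EFinP.
Qed.

Hypothesis nu_fin : (nu setT < +oo)%E.
Local Notation m := (mreal nu).

Lemma Pset_two_level A (al be : R) : measurable A -> 0 <= al <= 1 -> 0 <= be <= 1 ->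
  al * m A + be * m (~` A) = 1 -> exists Q, Pset P Y Q /\ Q A = (al * m A)%:E.
Proof.
move=> mA /andP[al0 al1] /andP[be0 be1] hab; have mAc := measurableC mA.
pose f w := al * Y w * \1_A w + be * Y w * \1_(~` A) w.
have mf : measurable_fun setT f.
  by apply: measurable_funD; apply: measurable_funM;
    [apply: measurable_funM => // | exact: measurable_indic
    |apply: measurable_funM => // | exact: measurable_indic].
have fA w : A w -> f w = al * Y w.
  by move=> Aw; rewrite /f !indicE in_setC mem_set //= mulr1 mulr0 addr0.
have fAc w : ~ A w -> f w = be * Y w.
  by move=> nAw; rewrite /f !indicE in_setC memNset //= mulr1 mulr0 add0r.
have fY w : 0 <= f w <= Y w.
  by have Yw := Y0 w; case: (pselect (A w)) => [/fA|/fAc] ->; apply/andP; split; nra.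
have int_scaled B c : measurable B -> 0 <= c -> (forall w, B w -> f w = c * Y w) ->
    (\int[P]_(w in B) (f w)%:E = (c * m B)%:E)%E.
  move=> mB c0 fB; rewrite EFinM -(mrealE nu_fin mB) nuE -ge0_integralZl_EFin //.
  - by apply: eq_integral => w /[!inE] /fB ->; rewrite EFinM.
  - by move=> w _; rewrite lee_fin.
  - exact/measurable_funTS/measurable_EFinP.
have f1 : (\int[P]_w (f w)%:E = 1)%E.
  rewrite -(setUv A) ge0_integral_setU //.
  - by rewrite (int_scaled _ al) // (int_scaled _ be) // -EFinD hab.
  - by rewrite setUv; exact/measurable_EFinP.
  - by move=> w _; rewrite lee_fin; case/andP: (fY w).
  - by rewrite disj_set2E setICr.
have f0 w : 0 <= f w by case/andP: (fY w).
have [Q QE] := density_probability_ex P mf f0 f1.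
exists Q; split; last by rewrite QE /density (int_scaled _ al).
by exists f; split => // w; apply/andP.
Qed.

Hypothesis nu_gt1 : (1 < nu setT)%E.

Lemma Pset_mass_gt A (r : R) : measurable A -> r < 1 -> (r%:E < nu A)%E ->
  exists Q, Pset P Y Q /\ (r%:E < Q A)%E.
Proof.
move=> mA r1; rewrite (mrealE nu_fin mA) lte_fin => rA.
have mass1 : 1 < m A + m (~` A).
  rewrite -mrealU ?setUv //; [|exact: measurableC | exact: setICr].
  by rewrite -lte_fin -mrealE.
have [al [be [hal hbe hab ral]]] :=
  convex_weights (mreal_ge0 nu A) (mreal_ge0 nu (~` A)) mass1 r1 rA.
have [Q [PQ QA]] := Pset_two_level _ _ _ mA hal hbe hab.
by exists Q; rewrite QA lte_fin.
Qed.

Lemma supLVaR_ge (L : R -> R) (Z : T -> R) (x : R) : HI L -> measurable_fun setT Z ->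
  ((L x)%:E < nu [set w | (x < Z w)%R])%E -> (x%:E <= supLVaR P Y L Z)%E.
Proof.
move=> [Lmono Lb] mZ hx.
have [Q [PQ QZ]] := Pset_mass_gt _ _ (measurable_fun_o_infty x mZ) (Lb x).2 hx.
apply: (@le_trans _ _ (LVaR L Q Z)); last by apply: ereal_sup_ubound; exists Q.
apply: le_ereal_inf_tmp => _ [z hz <-]; rewrite lee_fin leNgt; apply/negP => zx.
have QZz : (Q [set w | (x < Z w)%R] <= Q [set w | (z < Z w)%R])%E.
  apply: le_measure; rewrite ?inE; try exact: measurable_fun_o_infty.
  by move=> w /= xw; exact: lt_trans zx xw.
have := lt_le_trans QZ (le_trans QZz hz); rewrite lte_fin.
have := Lmono z x (ltW zx); lra.
Qed.

Lemma supLVaR_gtNy (L : R -> R) (Z : T -> R) : HI L -> measurable_fun setT Z ->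
  (-oo < supLVaR P Y L Z)%E.
Proof.
move=> HL mZ; suff [k hk] : exists k : nat,
    ((L (- k%:R))%:E < nu [set w | (- k%:R < Z w)%R])%E.
  by apply: (lt_le_trans _ (@supLVaR_ge L Z _ HL mZ hk)); exact: ltNyr.
apply/not_existsP => H.
have cover : \bigcup_k [set w | (- k%:R < Z w)%R] = setT.
  apply/seteqP; split => // w _; exists (Num.bound `|Z w|) => //=.
  rewrite ltrNl (le_lt_trans _ (archi_boundP (normr_ge0 (Z w)))) //.
  by rewrite -normrN ler_norm.
have : (nu setT <= (L 0)%:E)%E.
  rewrite -cover; apply: nondecreasing_bigcup_mu_le => k.
  - exact: measurable_fun_o_infty.
  - by move=> w /=; apply: le_lt_trans; rewrite lerN2 ler_nat.
  - have := H k; move/negP; rewrite -leNgt => /le_trans; apply.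
    by rewrite lee_fin HL.1 // oppr_le0.
move/(lt_le_trans nu_gt1); rewrite lte_fin; have := (HL.2 0).2; lra.
Qed.

Let P_fin : (P setT < +oo)%E.
Proof. by rewrite probability_setT ltry. Qed.

Lemma density_positive_band A : measurable A -> 0 < m A ->
  exists j, 0 < mreal P (A `&` band Y j).
Proof.
move=> mA A0; apply/not_existsP => Pband.
have mAb j : measurable (A `&` band Y j) by exact/measurableI/measurable_band.
have nu_band j : (nu (A `&` band Y j) <= 0)%E.
  apply: (le_trans (density_le_mul _ j.+1%:R (mAb j) _)) => [w [_ /andP[_ /ltW]] //|].
  rewrite (mrealE P_fin (mAb j)) -EFinM lee_fin mulr_ge0_le0 //.
  by rewrite leNgt; apply/negP; exact: Pband.
pose Ypos := [set w | 0 < Y w].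
have mY0 : measurable Ypos by exact: measurable_fun_o_infty.
have nu_pos : (nu (A `&` Ypos) <= 0)%E.
  rewrite /Ypos -(@bigcup_band _ _ Y) setI_bigcupr.
  by apply: nondecreasing_bigcup_mu_le => // k; apply: setIS; exact: band_subS.
have nu_npos : (nu (A `\` Ypos) <= 0)%E.
  rewrite (le_trans (density_le_mul _ 0 (measurableD mA mY0) _)) ?mul0e //.
  by move=> w [_ /negP]; rewrite -leNgt.
move: A0; rewrite -lte_fin -(mrealE nu_fin mA) (measureDI nu mA mY0).
by rewrite ltNge (le_trans (leeD nu_npos nu_pos)) ?adde0.
Qed.

Hypothesis P_atomless : atomless P.

(* On [band Y j], nu and P agree up to the factor j+1. *)
Lemma density_has_small_subsets : has_small_subsets nu.
Proof.
move=> A mA A0 e e0; have [j Ej] := density_positive_band A mA A0.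
have mE : measurable (A `&` band Y j) by exact/measurableI/measurable_band.
pose K : R := j.+1%:R; have K0 : 0 < K by rewrite ltr0Sn.
have [B [mB BE B0 Be]] :=
  atomless_small_subsets P_atomless _ mE Ej _ (divr_gt0 e0 K0).
have BY w : B w -> K^-1 < Y w < K by move=> /BE [].
have up := density_le_mul _ K mB (fun w Bw => ltW (andP (BY w Bw)).2).
have Ki0 : 0 <= K^-1 by rewrite invr_ge0 ltW.
have lo := density_ge_mul _ _ mB Ki0 (fun w Bw => ltW (andP (BY w Bw)).1).
move: up lo; rewrite (mrealE nu_fin mB) (mrealE P_fin mB) -!EFinM !lee_fin => up lo.
exists B; split => //; first by move=> w /BE [].
- by apply: lt_le_trans lo; rewrite mulr_gt0 // invr_gt0.
- by apply: le_lt_trans up _; rewrite -ltr_pdivlMl // mulrC.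
Qed.

Variables (Xs : set (T -> R)) (n : nat) (L : nat -> R -> R).
Hypotheses (n0 : (0 < n)%N) (HL : forall i, (1 <= i <= n)%N -> HI (L i)).
Hypothesis Xs_adm : admissible Xs.
Variable X : T -> R.
Hypothesis XsX : Xs X.

Local Notation LVaR_density_inf :=
  (ereal_inf [set LVaR_mu (Lam_y L n y) (density P Y) X | y in [set y | y 0%N = 0]]).

Let mXs Z : Xs Z -> measurable_fun setT Z.
Proof. by case: Xs_adm => + _ _ _ _; apply. Qed.

Lemma admissible_split_below (xs c : nat -> R) (x : R) :
  (forall i, (1 <= i <= n)%N -> 0 <= c i) -> \sum_(1 <= i < n.+1) xs i = x ->
  (nu [set w | (x < X w)%R] <= (\sum_(1 <= i < n.+1) c i)%:E)%E ->
  exists Xi : nat -> T -> R, [/\ forall i, Xs (Xi i),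
    forall w, \sum_(1 <= i < n.+1) Xi i w = X w &
    forall i, (1 <= i <= n)%N -> (nu [set w | (xs i < Xi i w)%R] <= (c i)%:E)%E].
Proof.
move=> c0 sum_xs hS; case: Xs_adm => _ Xc XD XB XI.
set S := [set w | (x < X w)%R] in hS *.
have mS : measurable S by exact/measurable_fun_o_infty/mXs.
have c0' j : (j <= n.-1)%N -> 0 <= c j.+1 by move=> jn; apply: c0; rewrite /= -(prednK n0) ltnS.
move: hS; rewrite (mrealE nu_fin mS) lee_fin big_add1 /= -[N in \sum_(0 <= i < N) _](prednK n0).
move=> /(measure_partition_le nu_fin density_has_small_subsets
  _ _ _ c0' mS) [B [mB Bdisj BS Bcov]].
pose Xi i w := xs i + (X w - x) * \1_(B i.-1) w.
have XiXs i : Xs (Xi i) by apply: XD => //; apply: XI => //; exact: XB.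
exists Xi; split => // [w|i /andP[i1 iN]].
  have [j jn Bjw] := Bcov w; rewrite big_split /= sum_xs -mulr_sumr big_add1 /=.
  rewrite (sum_indic_partition _ Bdisj _ Bjw) ?mulr1 1?addrC ?subrK //.
  by rewrite -(prednK n0) ltnS.
have mBS : measurable (B i.-1 `&` S) by exact: measurableI.
apply: (@le_trans _ _ (nu (B i.-1 `&` S))).
  apply: le_measure; rewrite ?inE //; first exact/measurable_fun_o_infty/mXs.
  move=> w /=; rewrite ltrDl indicE; case: (pselect (B i.-1 w)) => Bw.
    by rewrite mem_set // mulr1 subr_gt0.
  by rewrite memNset // mulr0 ltxx.
have := BS i.-1; rewrite prednK // (mrealE nu_fin mBS) lee_fin; apply.
by rewrite -ltnS !prednK.
Qed.

Lemma infconv_le_LVaR_density_inf :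
  (infconv Xs n (fun i => supLVaR P Y (L i)) X <= LVaR_density_inf)%E.
Proof.
apply: le_ereal_inf_tmp => _ [y y0 <-]; apply: le_ereal_inf_tmp => _ [x hx <-].
pose xs := increments n y x.
have c0 i : (1 <= i <= n)%N -> 0 <= L i (xs i) by move/HL => [_ /(_ (xs i)) [/ltW]].
have hS : (nu [set w | (x < X w)%R] <= (\sum_(1 <= i < n.+1) L i (xs i))%:E)%E.
  by rewrite nuE -Lam_y_increments.
have [Xi [XiXs sumXi Xi_le]] := admissible_split_below _ _ c0 (@sum_increments _ n y x n0 y0) hS.
apply: (@le_trans _ _ (\sum_(1 <= i < n.+1) supLVaR P Y (L i) (Xi i))%E).
  by apply: ereal_inf_lbound; exists Xi.
rewrite -(@sum_increments _ n y x n0 y0) -sumEFin big_nat_cond [leRHS]big_nat_cond.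
apply: lee_sum => i /andP[iN _]; apply: supLVaR_le => //; first exact: mXs.
exact: Xi_le.
Qed.

Lemma LVaR_density_inf_le_sum (Xi : nat -> T -> R) (xi : nat -> R) :
  (forall i, (1 <= i <= n)%N -> Xs (Xi i)) -> (forall w, \sum_(1 <= i < n.+1) Xi i w = X w) ->
  (forall i, (1 <= i <= n)%N -> (nu [set w | (xi i < Xi i w)%R] <= (L i (xi i))%:E)%E) ->
  (LVaR_density_inf <= (\sum_(1 <= i < n.+1) xi i)%:E)%E.
Proof.
move=> XiXs sumXi hxi; pose y := partial_sums xi.
apply: (@le_trans _ _ (LVaR_mu (Lam_y L n y) (density P Y) X)).
  by apply: ereal_inf_lbound; exists y => //; exact: partial_sums0.
apply: ereal_inf_lbound; exists (y n) => //=.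
have -> : Lam_y L n y (y n) = \sum_(1 <= i < n.+1) L i (xi i).
  by rewrite Lam_y_increments //; apply: eq_big_nat => i ni; rewrite increments_partial_sums.
rewrite -nuE -sumEFin.
apply: le_trans (measure_sum_gt_le nu n Xi xi (fun i ni => mXs (XiXs i ni)) (mXs XsX) sumXi) _.
by rewrite big_nat_cond [leRHS]big_nat_cond; apply: lee_sum => i /andP[ni _]; exact: hxi.
Qed.

Lemma LVaR_density_inf_le_infconv :
  (LVaR_density_inf <= infconv Xs n (fun i => supLVaR P Y (L i)) X)%E.
Proof.
apply: le_ereal_inf_tmp => _ [Xi [XiXs sumXi] <-].
pose s i := supLVaR P Y (L i) (Xi i).
have sNy i : (1 <= i <= n)%N -> s i != -oo%E.
  by move=> ni; rewrite gt_eqF // supLVaR_gtNy //; [exact: HL | exact/mXs/XiXs].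
have [[i [ni siy]]|s_fin] := pselect (exists i, (1 <= i <= n)%N /\ s i = +oo%E).
  suff -> : (\sum_(1 <= i < n.+1) s i = +oo)%E by exact: leey.
  rewrite big_nat_cond; apply/esum_eqyP => [j /andP[nj _]|]; first exact: sNy.
  exists i; split => //; last by rewrite ni.
  by rewrite mem_index_iota; case/andP: ni => -> /=; rewrite ltnS.
have sE i : (1 <= i <= n)%N -> s i = (fine (s i))%:E.
  move=> ni; rewrite fineK // fin_numE sNy //=.
  by apply/eqP => siy; apply: s_fin; exists i.
rewrite big_nat_cond (eq_bigr (fun i => (fine (s i))%:E)) => [|i /andP[ni _]]; last exact: sE.
rewrite -big_nat_cond sumEFin; apply/lee_addgt0Pr => e e0.
have en0 : 0 < e / n%:R by rewrite divr_gt0 // ltr0n.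
pose xi i := fine (s i) + e / n%:R.
have hxi i : (1 <= i <= n)%N ->
    (nu [set w | (xi i < Xi i w)%R] <= (L i (xi i))%:E)%E.
  move=> ni; rewrite leNgt; apply/negP => /(supLVaR_ge _ (HL i ni) (mXs (XiXs i ni))).
  by rewrite -/(s i) (sE i ni) lee_fin /xi; lra.
apply: le_trans (@LVaR_density_inf_le_sum Xi xi XiXs sumXi hxi) _.
rewrite -EFinD lee_fin /xi big_split /= sumr_const_nat subn1 /=.
by rewrite -[_ *+ n]mulr_natr divfK ?gt_eqF ?ltr0n.
Qed.

Lemma infconv_supLVaR_eq : infconv Xs n (fun i => supLVaR P Y (L i)) X = LVaR_density_inf.
Proof.
by apply/le_anti; rewrite infconv_le_LVaR_density_inf LVaR_density_inf_le_infconv.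
Qed.

End density_bounds.

Local Open Scope ereal_scope.

Theorem mainTheorem17 (R : realType) (d : measure_display) (T : measurableType d)
  (P : probability T R) (Y : T -> R) (Xs : set (T -> R))
  (n : nat) (L : nat -> R -> R) :
  (2 <= n)%N ->
  (forall i, (1 <= i <= n)%N -> HI (L i)) ->
  atomless P ->
  measurable_fun setT Y ->
  (forall w, (0 <= Y w)%R) ->
  1 < \int[P]_w (Y w)%:E ->
  \int[P]_w (Y w)%:E < +oo ->
  admissible Xs ->
  forall X, Xs X ->
    infconv Xs n (fun i => supLVaR P Y (L i)) X =
    ereal_inf [set ereal_inf [set x%:E | x in [set x : R |
                  \int[P]_(w in [set w | (x < X w)%R]) (Y w)%:E
                     <= (Lam_y L n y x)%:E]]
              | y in [set y : nat -> R | y 0%N = 0%R]].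
Proof.
move=> n2 HL P_atomless mY Y0 Y_gt1 Y_fin Xs_adm X XsX.
have [nu nuE] := density_measure_ex P mY Y0.
have nuT : nu setT = \int[P]_w (Y w)%:E by rewrite nuE.
by apply: infconv_supLVaR_eq; rewrite ?nuT // ltnW.
Qed.
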